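(* For every Boolean matrix $I\in\{0,1\}^{n\times m}$, $\mathrm{rank}_\mathrm{B}(I)\leq\mathrm{rank}_\mathrm{B}(\mathcal{E}(I))$.
   Context: $\mathrm{rank}_\mathrm{B}(K)$ (Boolean rank) of $K\in\{0,1\}^{n\times m}$ is the least $k$ for which there exist $A\in\{0,1\}^{n\times k}$, $B\in\{0,1\}^{k\times m}$ with $K=A\circ B$, where $(A\circ B)_{ij}=\max_{l=1}^k\min(A_{il},B_{lj})$. With $X=\{1,\dots,n\}$, $Y=\{1,\dots,m\}$ and for $C\subseteq X$, $D\subseteq Y$: $C^{\uparrow}=\{j\mid \forall i\in C: I_{ij}=1\}$, $D^{\downarrow}=\{i\mid \forall j\in D: I_{ij}=1\}$; $\mathcal{B}(I)=\{\langle C,D\rangle\mid C^\uparrow=D, D^\downarrow=C\}$ ordered by inclusion of first components; $\gamma(i)=\langle\{i\}^{\uparrow\downarrow},\{i\}^\uparrow\rangle$, $\mu(j)=\langle\{j\}^\downarrow,\{j\}^{\downarrow\uparrow}\rangle$, $\mathcal{I}_{ij}=\{c\in\mathcal{B}(I)\mid\gamma(i)\leq c\leq\mu(j)\}$. $\mathcal{E}(I)\in\{0,1\}^{n\times m}$ is defined by $\mathcal{E}(I)_{ij}=1$ iff $\mathcal{I}_{ij}$ is non-empty and minimal w.r.t. $\subseteq$ among the non-empty sets $\mathcal{I}_{i'j'}$. *)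

From mathcomp Require Import all_boot all_order all_algebra.
Set Implicit Arguments. Unset Strict Implicit. Unset Printing Implicit Defensive.

Definition bmul (n k m : nat) (A : 'M[bool]_(n, k)) (B : 'M[bool]_(k, m))
  : 'M[bool]_(n, m) := \matrix_(i < n, j < m) [exists l : 'I_k, A i l && B l j].

Definition bfact (n m : nat) (K : 'M[bool]_(n, m)) (k : nat) : bool :=
  [exists A : 'M[bool]_(n, k), exists B : 'M[bool]_(k, m), K == bmul A B].

Definition bid (m : nat) : 'M[bool]_(m, m) := \matrix_(l < m, j < m) (l == j).

Lemma bfact_exists (n m : nat) (K : 'M[bool]_(n, m)) : exists k, bfact K k.
Proof.
exists m; apply/existsP; exists K; apply/existsP; exists (bid m).
apply/eqP/matrixP => i j; rewrite !mxE.
apply/idP/existsP => [Kij|[l /andP[Kil]]].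
  by exists j; rewrite Kij mxE eqxx.
by rewrite mxE => /eqP <-.
Qed.

Definition rankB (n m : nat) (K : 'M[bool]_(n, m)) : nat :=
  ex_minn (bfact_exists K).

Section FCA.
Variables (n m : nat) (I : 'M[bool]_(n, m)).

Definition up (C : {set 'I_n}) : {set 'I_m} := [set j | [forall i in C, I i j]].
Definition down (D : {set 'I_m}) : {set 'I_n} := [set i | [forall j in D, I i j]].

Definition is_concept (c : {set 'I_n} * {set 'I_m}) : bool :=
  (up c.1 == c.2) && (down c.2 == c.1).

(* order on B(I): inclusion of extents *)
Definition cle (c d : {set 'I_n} * {set 'I_m}) : bool := c.1 \subset d.1.

Definition gammaC (i : 'I_n) : {set 'I_n} * {set 'I_m} :=
  (down (up [set i]), up [set i]).
Definition muC (j : 'I_m) : {set 'I_n} * {set 'I_m} :=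
  (down [set j], up (down [set j])).

Definition interval (i : 'I_n) (j : 'I_m) : {set {set 'I_n} * {set 'I_m}} :=
  [set c | is_concept c && cle (gammaC i) c && cle c (muC j)].

Definition Emat : 'M[bool]_(n, m) :=
  \matrix_(i < n, j < m)
    ((interval i j != set0) &&
     [forall i' : 'I_n, forall j' : 'I_m,
        ((interval i' j' != set0) && (interval i' j' \subset interval i j))
        ==> (interval i j \subset interval i' j')]).

End FCA.

(* Replace each factor l of a Boolean factorization of E(I) by the formal concept generated
   by its column set D_l, namely <D_l^down, D_l^down^up>.  These concepts are rectangles of
   ones of I, and they still cover I: the interval of a one (i, j) of I is nonempty, so it
   contains a minimal nonempty interval I_i'j', and E(I)_i'j' = 1 is covered by some factor
   l.  All columns of D_l are ones of E(I), hence of I, in row i', so the concept generated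
   by D_l lies in I_i'j' and therefore in I_ij, i.e. it contains the cell (i, j). *)

From Pilot Require Import Defs.
From mathcomp Require Import all_boot all_order all_algebra.
Set Implicit Arguments. Unset Strict Implicit. Unset Printing Implicit Defensive.

Lemma bfact_rankB (n m : nat) (K : 'M[bool]_(n, m)) : bfact K (rankB K).
Proof. by rewrite /rankB; case: ex_minnP. Qed.

Lemma rankB_min (n m : nat) (K : 'M[bool]_(n, m)) (k : nat) :
  bfact K k -> rankB K <= k.
Proof. by rewrite /rankB; case: ex_minnP => r _; apply. Qed.

Section ConceptLattice.
Variables (n m : nat) (I : 'M[bool]_(n, m)).

Lemma galois_down_up (C : {set 'I_n}) (D : {set 'I_m}) :
  (C \subset down I D) = (D \subset up I C).
Proof.
apply/subsetP/subsetP => sub x xin; rewrite inE; apply/forallP => y;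
  apply/implyP => yin; have := sub y yin; rewrite inE => /forallP/(_ x)/implyP;
  exact.
Qed.

Lemma sub_down_up (C : {set 'I_n}) : C \subset down I (up I C).
Proof. by rewrite galois_down_up. Qed.

Lemma sub_up_down (D : {set 'I_m}) : D \subset up I (down I D).
Proof. by rewrite -galois_down_up. Qed.

Lemma up_down_up (C : {set 'I_n}) : up I (down I (up I C)) = up I C.
Proof.
apply/eqP; rewrite eqEsubset andbC -galois_down_up subxx /=.
apply/subsetP => j; rewrite !inE => /forallP DUj; apply/forallP => i.
by apply/implyP => iC; apply: (implyP (DUj i)); apply: (subsetP (sub_down_up C)).
Qed.

Lemma down_up_down (D : {set 'I_m}) : down I (up I (down I D)) = down I D.
Proof.
apply/eqP; rewrite eqEsubset andbC galois_down_up subxx /=.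
apply/subsetP => i; rewrite !inE => /forallP UDi; apply/forallP => j.
by apply/implyP => jD; apply: (implyP (UDi j)); apply: (subsetP (sub_up_down D)).
Qed.

Lemma mem_up_down (C : {set 'I_n}) (i : 'I_n) (j : 'I_m) :
  i \in C -> j \in up I C -> I i j.
Proof. by move=> iC; rewrite inE => /forallP/(_ i)/implyP; apply. Qed.

Definition concept_of (D : {set 'I_m}) : {set 'I_n} * {set 'I_m} :=
  (down I D, up I (down I D)).

Lemma is_conceptE (c : {set 'I_n} * {set 'I_m}) :
  is_concept I c -> c = concept_of c.2.
Proof.
case/andP=> /eqP upc /eqP downc.
by rewrite /concept_of downc upc; case: c {upc downc}.
Qed.

Lemma mem_interval_concept_of (i : 'I_n) (j : 'I_m) (D : {set 'I_m}) :
  (concept_of D \in Defs.interval I i j) =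
  (i \in down I D) && (j \in up I (down I D)).
Proof.
rewrite inE /is_concept /cle /gammaC /muC /= down_up_down !eqxx /=.
by rewrite galois_down_up up_down_up -galois_down_up sub1set galois_down_up sub1set.
Qed.

Lemma interval_neq0 (i : 'I_n) (j : 'I_m) : (Defs.interval I i j != set0) = I i j.
Proof.
apply/set0Pn/idP => [[c cin] | Iij].
  have defc : c = concept_of c.2.
    by move: cin; rewrite inE => /andP[/andP[/is_conceptE]].
  move: cin; rewrite defc mem_interval_concept_of.
  by case/andP; apply: mem_up_down.
exists (concept_of [set j]).
rewrite mem_interval_concept_of (subsetP (sub_up_down _) j (set11 j)) andbT inE.
by apply/forallP => j'; apply/implyP; rewrite inE => /eqP ->.
Qed.

Lemma Emat_le (i : 'I_n) (j : 'I_m) : Emat I i j -> I i j.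
Proof. by rewrite mxE -interval_neq0 => /andP[]. Qed.

Lemma Emat_sub_interval (i : 'I_n) (j : 'I_m) : I i j ->
  exists i' j', Emat I i' j' && (Defs.interval I i' j' \subset Defs.interval I i j).
Proof.
pose nonempty_interval := [pred S | [exists i', exists j',
  (S == Defs.interval I i' j') && (S != set0)]].
rewrite -interval_neq0 => ne0.
have [|S minS sub] := @minset_exists _ nonempty_interval (Defs.interval I i j).
  by apply/existsP; exists i; apply/existsP; exists j; rewrite eqxx.
have /existsP[i' /existsP[j' /andP[/eqP defS S0]]] := minsetp minS.
exists i', j'; rewrite -defS sub andbT mxE -defS S0 /=.
apply/forallP => i''; apply/forallP => j''; apply/implyP => /andP[ne0'' sub''].
rewrite (minsetinf minS _ sub'') //.
by apply/existsP; exists i''; apply/existsP; exists j''; rewrite eqxx.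
Qed.

Lemma bfact_Emat (k : nat) : bfact (Emat I) k -> bfact I k.
Proof.
case/existsP=> A /existsP[B /eqP defE].
pose D (l : 'I_k) := [set j | B l j].
apply/existsP; exists (\matrix_(i < n, l < k) (i \in down I (D l)))%R.
apply/existsP; exists (\matrix_(l < k, j < m) (j \in up I (down I (D l))))%R.
apply/eqP/matrixP => i j; rewrite !mxE; apply/idP/existsP => [Iij | [l]].
  have [i' [j' /andP[Ei'j' sub]]] := Emat_sub_interval Iij.
  move: Ei'j'; rewrite defE mxE => /existsP[l /andP[Ai'l Blj']].
  have Dl_row : i' \in down I (D l).
    rewrite inE; apply/forallP => y; apply/implyP; rewrite inE => Bly.
    by apply: Emat_le; rewrite defE mxE; apply/existsP; exists l; rewrite Ai'l.
  have Dl_col : j' \in up I (down I (D l)).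
    by apply: (subsetP (sub_up_down (D l))); rewrite inE.
  have := subsetP sub (concept_of (D l)).
  rewrite !mem_interval_concept_of Dl_row Dl_col => /(_ isT) /andP[iD jD].
  by exists l; rewrite !mxE iD jD.
by rewrite !mxE => /andP[]; apply: mem_up_down.
Qed.

End ConceptLattice.

Theorem theorem4 (n m : nat) (I : 'M[bool]_(n, m)) :
  rankB I <= rankB (Emat I).
Proof. exact/rankB_min/bfact_Emat/bfact_rankB. Qed.
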